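(* Let $\rho:\mathfrak{k}\to\mathrm{End}(\mathbb{C}^s)$ be a generalized spin representation of $\mathfrak{k}$, i.e. a Lie algebra representation such that $\rho(X_i)^2=-\frac14\,\mathrm{id}_s$ for all $i=1,\dots,n$. Write $[A,B]=AB-BA$ and $\{A,B\}=AB+BA$. Then for all $1\le i\neq j\le n$: $[\rho(X_i),\rho(X_j)]=0$ if $a_{ij}=0$ (i.e. $i,j$ do not form an edge of the Dynkin diagram), and $\{\rho(X_i),\rho(X_j)\}=0$ if $a_{ij}=-1$ (i.e. $i,j$ form an edge of the Dynkin diagram).
   Context: Let $A=(a_{ij})_{1\le i,j\le n}$ be a symmetrizable generalized Cartan matrix that is simply laced (all off-diagonal entries are $0$ or $-1$); its Dynkin diagram has vertices $1,\dots,n$ and an edge between $i\neq j$ iff $a_{ij}=-1$. Let $\mathfrak{g}=\mathfrak{g}(A)$ be the split real Kac–Moody algebra with Chevalley generators $e_i,f_i$ and Cartan subalgebra $\mathfrak h$, and let $\omega$ be its Chevalley involution ($\omega(e_i)=-f_i$, $\omega(f_i)=-e_i$, $\omega(h)=-h$ for $h\in\mathfrak h$). The maximal compact subalgebra is $\mathfrak{k}=\mathrm{Fix}(\omega)$. The Berman generators are $X_i:=e_i-f_i\in\mathfrak k$; $\mathfrak{k}$ is isomorphic to the real Lie algebra generated by $X_1,\dots,X_n$ subject to the relations $[X_i,[X_i,X_j]]=-X_j$ if $a_{ij}=-1$ and $[X_i,X_j]=0$ if $a_{ij}=0$. *)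

From HB Require Import structures.
From mathcomp Require Import all_boot all_order all_algebra.
From mathcomp Require Import complex.
From mathcomp Require Import reals.
Set Implicit Arguments. Unset Strict Implicit. Unset Printing Implicit Defensive.
Import Order.TTheory GRing.Theory Num.Theory.
Local Open Scope ring_scope.

Definition is_GCM (n : nat) (A : 'M[int]_n) : Prop :=
  (forall i, A i i = 2) /\
  (forall i j, i != j -> A i j <= 0) /\
  (forall i j, A i j = 0 <-> A j i = 0).

Definition symmetrizable (n : nat) (A : 'M[int]_n) : Prop :=
  exists d : 'I_n -> rat, (forall i, 0 < d i) /\
    (forall i j, d i * (A i j)%:~R = d j * (A j i)%:~R).

Definition simply_laced (n : nat) (A : 'M[int]_n) : Prop :=
  forall i j, i != j -> A i j = 0 \/ A i j = -1.

Definition mxcomm (C : nzRingType) (s : nat) (P Q : 'M[C]_s) : 'M[C]_s :=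
  P *m Q - Q *m P.
Definition mxacomm (C : nzRingType) (s : nat) (P Q : 'M[C]_s) : 'M[C]_s :=
  P *m Q + Q *m P.

(* A representation rho : k -> End(C^s) of the maximal compact subalgebra
   k = Fix(omega), presented (Berman) by generators X_1..X_n and relations
   [X_i,[X_i,X_j]] = -X_j if a_ij = -1 and [X_i,X_j] = 0 if a_ij = 0 (i <> j).
   Since k is the real Lie algebra with this presentation, a real Lie algebra
   representation of k on C^s is the same as the data of the images
   rho i = rho(X_i) satisfying the defining relations. *)
Definition berman_rep (n : nat) (A : 'M[int]_n) (C : nzRingType) (s : nat)
  (rho : 'I_n -> 'M[C]_s) : Prop :=
  forall i j, i != j ->
    (A i j = -1 -> mxcomm (rho i) (mxcomm (rho i) (rho j)) = - rho j) /\
    (A i j = 0 -> mxcomm (rho i) (rho j) = 0).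

Definition gen_spin (n : nat) (R : realType) (s : nat)
  (rho : 'I_n -> 'M[R[i]]_s) : Prop :=
  forall i, rho i *m rho i = (- (4%:R)^-1) %:M.

From HB Require Import structures.
From mathcomp Require Import all_boot all_order all_algebra.
From mathcomp Require Import complex.
From mathcomp Require Import reals.
From mathcomp Require Import ring.

Set Implicit Arguments.
Unset Strict Implicit.
Unset Printing Implicit Defensive.
Import Order.TTheory GRing.Theory Num.Theory.
Local Open Scope ring_scope.

(* If a^2 = c with 4c + 1 = 0, the relation [a,[a,b]] = -b reads
   2 (c b - a b a) = -b, i.e. a b a = -c b.  Hence a (ab + ba) = c b + a b a = 0,
   and a is invertible, so ab + ba = 0.  The commuting case is a defining
   relation of the presentation. *)

Section SquareScalar.

Variables (F : fieldType) (s : nat) (c : F) (a : 'M[F]_s).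
Hypothesis a_sqr : a *m a = c%:M.

Lemma sqr_scalar_mulmx_eq0 (P : 'M[F]_s) : c != 0 -> a *m P = 0 -> P = 0.
Proof.
move=> c_neq0 aP0.
by rewrite -[P]scale1r -(mulVf c_neq0) -scalerA -[c *: P]mul_scalar_mx -a_sqr
  -mulmxA aP0 mulmx0 scaler0.
Qed.

Lemma mulmx_mxacomm (b : 'M[F]_s) : a *m mxacomm a b = c *: b + a *m b *m a.
Proof. by rewrite /mxacomm mulmxDr !mulmxA a_sqr mul_scalar_mx. Qed.

Lemma mxcomm_mxcomm_sqr_scalar (b : 'M[F]_s) :
  mxcomm a (mxcomm a b) = (c *: b - a *m b *m a) *+ 2.
Proof.
have aab : a *m (a *m b) = c *: b by rewrite mulmxA a_sqr mul_scalar_mx.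
have baa : b *m a *m a = c *: b by rewrite -mulmxA a_sqr mul_mx_scalar.
rewrite /mxcomm mulmxBr mulmxBl aab baa !mulmxA mulr2n.
by rewrite opprB addrA [_ - _ + _]addrC addrA.
Qed.

End SquareScalar.

Lemma mxacomm_eq0_of_spin (F : fieldType) (s : nat) (a b : 'M[F]_s) :
  (2%:R : F) != 0 -> a *m a = (- 4%:R^-1)%:M ->
  mxcomm a (mxcomm a b) = - b -> mxacomm a b = 0.
Proof.
set c : F := - 4%:R^-1 => two_neq0 a_sqr.
have four_neq0 : (4%:R : F) != 0 by rewrite (natrM F 2 2) mulf_neq0.
have c_neq0 : c != 0 by rewrite oppr_eq0 invr_eq0.
rewrite (mxcomm_mxcomm_sqr_scalar a_sqr) -scaler_nat => rel.
have aba : a *m b *m a = (c + 2%:R^-1) *: b.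
  have half : c *: b - a *m b *m a = - (2%:R^-1 *: b).
    by apply: (scalerI two_neq0); rewrite rel scalerN scalerA mulfV // scale1r.
  by rewrite -(subKr (c *: b) (a *m b *m a)) half opprK scalerDl.
apply: (sqr_scalar_mulmx_eq0 a_sqr c_neq0).
rewrite (mulmx_mxacomm a_sqr) aba -scalerDl (_ : c + (c + 2%:R^-1) = 0) ?scale0r //.
by rewrite /c; field; rewrite two_neq0 four_neq0.
Qed.

Theorem proposition2p3 (n : nat) (A : 'M[int]_n) (R : realType) (s : nat)
  (rho : 'I_n -> 'M[R[i]]_s) :
  is_GCM A -> symmetrizable A -> simply_laced A ->
  berman_rep A rho -> gen_spin rho ->
  forall i j : 'I_n, i != j ->
    (A i j = 0 -> mxcomm (rho i) (rho j) = 0) /\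
    (A i j = -1 -> mxacomm (rho i) (rho j) = 0).
Proof.
move=> _ _ _ berman spin i j ij_neq.
have [edge_rel comm_rel] := berman i j ij_neq.
have two_neq0 : (2%:R : R[i]) != 0 by rewrite pnatr_eq0.
split; first exact: comm_rel.
move/edge_rel; exact: mxacomm_eq0_of_spin two_neq0 (spin i).
Qed.
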